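(* Let $\alpha>-1$, $M\ge0$, $N\ge0$, and for $n\ge1$ let $$y(x)=L_n^{\alpha,M,N}(x)=A_0L_n^{(\alpha)}(x)+A_1\frac{d}{dx}L_n^{(\alpha)}(x)+A_2\frac{d^2}{dx^2}L_n^{(\alpha)}(x),$$ where $$A_0=1+M\binom{n+\alpha}{n-1}+\frac{n(\alpha+2)-(\alpha+1)}{(\alpha+1)(\alpha+3)}N\binom{n+\alpha}{n-2}+\frac{MN}{(\alpha+1)(\alpha+2)}\binom{n+\alpha}{n-1}\binom{n+\alpha+1}{n-2},$$ $$A_1=M\binom{n+\alpha}{n}+\frac{n-1}{\alpha+1}N\binom{n+\alpha}{n-1}+\frac{2MN}{(\alpha+1)^2}\binom{n+\alpha}{n}\binom{n+\alpha+1}{n-2},$$ $$A_2=\frac{N}{\alpha+1}\binom{n+\alpha}{n-1}+\frac{MN}{(\alpha+1)^2}\binom{n+\alpha}{n}\binom{n+\alpha+1}{n-1}.$$ Define for $i=0,1,2,\ldots$ $$b_i^*(\alpha,x)=\frac{1}{i!}\sum_{j=0}^{i}(-1)^j\binom{i}{j}(\alpha+1)_{i-j}x^j,\qquad c_i^*(\alpha,x)=\frac{(-1)^i}{i!}x^i.$$ Then for every $n=1,2,3,\ldots$ the polynomial $y=L_n^{\alpha,M,N}$ satisfies $$\sum_{i=0}^{\infty}b_i^*(\alpha,x)y^{(i)}(x)+M\sum_{i=0}^{\infty}c_i^*(\alpha,x)y^{(i)}(x)=0 .$$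
   Context: $L_n^{(\alpha)}(x)=\sum_{k=0}^n\frac{(-1)^k}{k!}\binom{n+\alpha}{n-k}x^k$ denotes the classical Laguerre polynomial. $(c)_m$ is the Pochhammer symbol, $\binom{a}{m}$ the generalized binomial coefficient for real $a$, with $\binom{a}{m}=0$ when $m$ is a negative integer. The polynomials $L_n^{\alpha,M,N}$ so defined are orthogonal with respect to the Sobolev inner product $\langle f,g\rangle=\frac{1}{\Gamma(\alpha+1)}\int_0^\infty x^\alpha e^{-x}f(x)g(x)\,dx+Mf(0)g(0)+Nf'(0)g'(0)$. Since $y$ is a polynomial, the sums are finite. *)

From HB Require Import structures.
From mathcomp Require Import all_boot all_order all_algebra.
Set Implicit Arguments. Unset Strict Implicit. Unset Printing Implicit Defensive.
Import Order.TTheory GRing.Theory Num.Theory.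
Local Open Scope ring_scope.

Definition poch {R : pzRingType} (c : R) (m : nat) : R :=
  \prod_(i < m) (c + i%:R).

Definition gbinom {R : fieldType} (a : R) (m : nat) : R :=
  (\prod_(i < m) (a - i%:R)) / (m`!)%:R.

Definition gbinomz {R : fieldType} (a : R) (m : int) : R :=
  match m with Posz k => gbinom a k | Negz _ => 0 end.

Definition laguerre {R : fieldType} (n : nat) (alpha : R) : {poly R} :=
  \sum_(k < n.+1)
     (((-1) ^+ k / (k`!)%:R * gbinom (n%:R + alpha) (n - k)%N) *: 'X^k).

Section Coefs.
Variables (R : fieldType) (alpha M N : R) (n : nat).
Let na : R := n%:R + alpha.
Let nz : int := n%:Z.

Definition A0 : R :=
  1 + M * gbinomz na (nz - 1)
  + (n%:R * (alpha + 2) - (alpha + 1)) / ((alpha + 1) * (alpha + 3))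
      * N * gbinomz na (nz - 2)
  + M * N / ((alpha + 1) * (alpha + 2))
      * gbinomz na (nz - 1) * gbinomz (na + 1) (nz - 2).

Definition A1 : R :=
  M * gbinomz na nz
  + (n%:R - 1) / (alpha + 1) * N * gbinomz na (nz - 1)
  + 2 * M * N / (alpha + 1) ^+ 2 * gbinomz na nz * gbinomz (na + 1) (nz - 2).

Definition A2 : R :=
  N / (alpha + 1) * gbinomz na (nz - 1)
  + M * N / (alpha + 1) ^+ 2 * gbinomz na nz * gbinomz (na + 1) (nz - 1).
End Coefs.

Definition laguerreMN {R : fieldType} (alpha M N : R) (n : nat) : {poly R} :=
  let L := laguerre n alpha in
  A0 alpha M N n *: L + A1 alpha M N n *: L^`() + A2 alpha M N n *: L^`(2).

Definition bstar {R : fieldType} (alpha x : R) (i : nat) : R :=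
  (i`!)%:R^-1 * \sum_(j < i.+1)
      ((-1) ^+ j * ('C(i, j))%:R * poch (alpha + 1) (i - j)%N * x ^+ j).

Definition cstar {R : fieldType} (x : R) (i : nat) : R :=
  (-1) ^+ i / (i`!)%:R * x ^+ i.

(* Let b_i, c_i be the polynomials x |-> b_i^*(alpha, x), c_i^*(x).
   Since b_0' = c_0' = 0, b_(i+1)' = - b_i and c_(i+1)' = - c_i, the derivatives
   of sum_i b_i y^(i) and sum_i c_i y^(i) telescope to zero, so both sums may be
   evaluated at x = 0, where they become sum_k (alpha+1)_k y_k and y(0).  The
   first is the functional p |-> Gamma(alpha+1)^-1 int_0^oo x^alpha e^-x p(x) dx
   written on monomials, so the claim is <y, 1> = 0 for the Sobolev inner
   product.  By Chu-Vandermonde this functional takes the values 0, -1, n-1 on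
   L_n, L_n', L_n'', and what remains is a rational identity in alpha and n for
   A_0, A_1, A_2. *)

From HB Require Import structures.
From mathcomp Require Import all_boot all_order all_algebra.
From mathcomp Require Import ring lra.
Set Implicit Arguments.
Unset Strict Implicit.
Unset Printing Implicit Defensive.
Import Order.TTheory GRing.Theory Num.Theory.
Local Open Scope ring_scope.

Section DerivativeSums.
Variable R : nzRingType.
Implicit Types (p : {poly R}) (b : nat -> {poly R}).

Lemma deriv_sum_mul_derivn b p K :
  (b 0%N)^`() = 0 -> (forall i, (b i.+1)^`() = - b i) -> (size p <= K)%N ->
  (\sum_(i < K) b i * p^`(i))^`() = 0.
Proof.
move=> b0 bS pK.
have sum_deriv k : (\sum_(i < k.+1) b i * p^`(i))^`() = b k * p^`(k.+1).
  elim: k => [|k IHk]; first by rewrite big_ord1 derivM b0 mul0r add0r.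
  by rewrite big_ord_recr derivD IHk derivM bS -derivnS mulNr addNKr.
case: K pK => [|K] pK; first by rewrite big_ord0 deriv0.
by rewrite sum_deriv derivn_poly0 ?mulr0.
Qed.

Lemma size_derivn_leq p i : (size p^`(i) <= size p)%N.
Proof.
elim: i => // i IHi; rewrite derivnS /deriv.
exact: leq_trans (size_poly _ _) (leq_trans (leq_pred _) IHi).
Qed.

Lemma horner0_derivn p i : (p^`(i)).[0] = p`_i * (i`!)%:R.
Proof. by rewrite horner_coef0 coef_derivn addn0 ffactnn mulr_natr. Qed.

End DerivativeSums.

Section ConstantSums.
Variable R : numDomainType.
Implicit Types (p : {poly R}) (b : nat -> {poly R}).

Lemma deriv_eq0_polyC p : p^`() = 0 -> p = (p`_0)%:P.
Proof.
move=> p'0; apply/polyP => -[|i]; rewrite coefC //=.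
have /eqP := congr1 (fun q : {poly R} => q`_i) p'0.
by rewrite coef_deriv coef0 -mulr_natr mulf_eq0 pnatr_eq0 orbF => /eqP.
Qed.

Lemma horner_sum_mul_derivn b p K x :
  (b 0%N)^`() = 0 -> (forall i, (b i.+1)^`() = - b i) -> (size p <= K)%N ->
  \sum_(i < K) (b i).[x] * (p^`(i)).[x] =
  \sum_(i < K) (b i).[0] * p`_i * (i`!)%:R.
Proof.
move=> b0 bS pK.
have S_const := deriv_eq0_polyC (deriv_sum_mul_derivn b0 bS pK).
have -> : \sum_(i < K) (b i).[x] * (p^`(i)).[x] =
          (\sum_(i < K) b i * p^`(i)).[x].
  by rewrite horner_sum; apply: eq_bigr => i _; rewrite hornerM.
rewrite S_const hornerC -horner_coef0 horner_sum.
by apply: eq_bigr => i _; rewrite hornerM horner0_derivn mulrA.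
Qed.

End ConstantSums.

Section KernelPolynomials.
Variable R : numFieldType.
Implicit Types alpha x : R.

Lemma natr_fact_neq0 k : (k`!)%:R != 0 :> R.
Proof. by rewrite pnatr_eq0 -lt0n fact_gt0. Qed.

Lemma natrS_neq0 k : (k.+1)%:R != 0 :> R.
Proof. by rewrite pnatr_eq0. Qed.

Definition bstar_poly alpha i : {poly R} :=
  \poly_(j < i.+1) ((i`!)%:R^-1 *
                    ((-1) ^+ j * ('C(i, j))%:R * poch (alpha + 1) (i - j))).

Definition cstar_poly i : {poly R} := ((-1) ^+ i / (i`!)%:R) *: 'X^i.

Lemma horner_bstar_poly alpha x i : (bstar_poly alpha i).[x] = bstar alpha x i.
Proof.
rewrite horner_poly /bstar mulr_sumr.
by apply: eq_bigr => j _; rewrite !mulrA.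
Qed.

Lemma horner_cstar_poly x i : (cstar_poly i).[x] = cstar x i.
Proof. by rewrite hornerZ hornerXn. Qed.

Lemma horner0_bstar_poly alpha i :
  (bstar_poly alpha i).[0] = poch (alpha + 1) i / (i`!)%:R.
Proof.
rewrite horner_poly big_ord_recl big1 => [|j _]; last by rewrite expr0n mulr0.
by rewrite !expr0 bin0 subn0 addr0 !mulr1 mul1r mulrC.
Qed.

Lemma deriv_bstar_poly0 alpha : (bstar_poly alpha 0)^`() = 0.
Proof. by apply/polyP => i; rewrite coef_deriv coef_poly coef0 mul0rn. Qed.

Lemma deriv_bstar_polyS alpha i :
  (bstar_poly alpha i.+1)^`() = - bstar_poly alpha i.
Proof.
apply/polyP => j; rewrite coef_deriv coefN !coef_poly ltnS.
case: ltnP => ji; last by rewrite mul0rn oppr0.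
have binS : ('C(i.+1, j.+1))%:R = (i.+1)%:R * ('C(i, j))%:R / (j.+1)%:R :> R.
  apply: (mulIf (natrS_neq0 j)).
  by rewrite divfK ?natrS_neq0 // -!natrM mul_bin_diag mulnC.
rewrite subSS -mulr_natr binS factS natrM exprS.
have := natr_fact_neq0 i; have := natrS_neq0 i; have := natrS_neq0 j.
by move=> j1 i1 fi; field; rewrite !nat1r j1 i1 fi.
Qed.

Lemma deriv_cstar_poly0 : (cstar_poly 0)^`() = 0.
Proof. by rewrite derivZ derivXn mulr0n scaler0. Qed.

Lemma deriv_cstar_polyS i : (cstar_poly i.+1)^`() = - cstar_poly i.
Proof.
rewrite derivZ derivXn /= -scaler_nat scalerA -scaleNr; congr (_ *: _).
rewrite factS natrM exprS.
have := natr_fact_neq0 i; have := natrS_neq0 i.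
by move=> i1 fi; field; rewrite nat1r i1 fi.
Qed.

End KernelPolynomials.

Section GammaMoment.
Variables (R : numFieldType) (alpha : R).
Implicit Types (x : R) (p q : {poly R}).

Definition gamma_moment p : R := \sum_(k < size p) poch (alpha + 1) k * p`_k.

Lemma gamma_momentE p K : (size p <= K)%N ->
  \sum_(k < K) poch (alpha + 1) k * p`_k = gamma_moment p.
Proof.
move=> pK; rewrite /gamma_moment.
rewrite (big_ord_widen _ (fun k => poch (alpha + 1) k * p`_k) pK).
rewrite [RHS]big_mkcond; apply: eq_bigr => k _.
by case: ltnP => // /leq_sizeP->; rewrite ?mulr0.
Qed.

Lemma gamma_momentD p q :
  gamma_moment (p + q) = gamma_moment p + gamma_moment q.
Proof.
rewrite -!(@gamma_momentE _ (maxn (size p) (size q))) ?leq_maxl ?leq_maxr //.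
  by rewrite -big_split; apply: eq_bigr => k _; rewrite coefD mulrDr.
exact: size_polyD.
Qed.

Lemma gamma_momentZ a p : gamma_moment (a *: p) = a * gamma_moment p.
Proof.
rewrite -(@gamma_momentE _ (size p)) ?size_scale_leq // mulr_sumr.
by apply: eq_bigr => k _; rewrite coefZ mulrCA.
Qed.

Lemma sum_bstar_derivn p K x : (size p <= K)%N ->
  \sum_(i < K) bstar alpha x i * (p^`(i)).[x] = gamma_moment p.
Proof.
move=> pK; under eq_bigr do rewrite -horner_bstar_poly.
rewrite horner_sum_mul_derivn ?deriv_bstar_poly0 //; last first.
  exact: deriv_bstar_polyS.
rewrite -(gamma_momentE pK); apply: eq_bigr => i _.
by rewrite horner0_bstar_poly mulrAC divfK ?natr_fact_neq0.
Qed.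

Lemma sum_cstar_derivn p K x : (size p <= K)%N ->
  \sum_(i < K) cstar x i * (p^`(i)).[x] = p`_0.
Proof.
case: K => [|K] pK; first by rewrite big_ord0 nth_default.
under eq_bigr do rewrite -horner_cstar_poly.
rewrite horner_sum_mul_derivn ?deriv_cstar_poly0 //; last first.
  exact: deriv_cstar_polyS.
rewrite big_ord_recl big1 => [|i _]; last first.
  by rewrite hornerZ hornerXn expr0n /= mulr0 !mul0r.
by rewrite hornerZ hornerXn !expr0 fact0 divr1 !mul1r mulr1 addr0.
Qed.

End GammaMoment.

Section GeneralizedBinomial.
Variable R : numFieldType.
Implicit Types a b c : R.

Lemma gbinom0 a : gbinom a 0 = 1.
Proof. by rewrite /gbinom big_ord0 fact0 divr1. Qed.

Lemma gbinom1 a : gbinom a 1 = a.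
Proof. by rewrite /gbinom big_ord1 subr0 divr1. Qed.

Lemma gbinomS_mul a m : gbinom a m.+1 * (m.+1)%:R = gbinom a m * (a - m%:R).
Proof.
rewrite /gbinom big_ord_recr factS natrM /=.
have := natr_fact_neq0 R m; have := natrS_neq0 R m.
by move=> m1 fm; field; rewrite nat1r m1 fm.
Qed.

Lemma gbinom_addr1_mul a m :
  gbinom (a + 1) m * (a + 1 - m%:R) = gbinom a m * (a + 1).
Proof.
have prod_shift : \prod_(i < m.+1) (a + 1 - i%:R) =
                  (a + 1) * \prod_(i < m) (a - i%:R).
  rewrite big_ord_recl subr0; congr (_ * _); apply: eq_bigr => i _.
  by rewrite lift0 -natr1; ring.
have prod_last : \prod_(i < m.+1) (a + 1 - i%:R) =
                 \prod_(i < m) (a + 1 - i%:R) * (a + 1 - m%:R).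
  by rewrite big_ord_recr.
by rewrite /gbinom mulrAC -prod_last prod_shift; ring.
Qed.

Lemma gbinomN c k : gbinom (- c) k = (-1) ^+ k / (k`!)%:R * poch c k.
Proof.
rewrite /gbinom /poch (eq_bigr (fun i : 'I_k => - (c + i%:R))) => [|i _].
  by rewrite prodrN card_ord mulrAC.
by rewrite opprD.
Qed.

Lemma gbinom_nat m k : gbinom (m%:R : R) k = ('C(m, k))%:R.
Proof.
elim: k => [|k IHk]; first by rewrite gbinom0 bin0.
apply: (mulIf (natrS_neq0 R k)).
rewrite gbinomS_mul IHk -natrM mulnC mul_bin_left natrM mulrC.
by case: (leqP k m) => km; [rewrite natrB | rewrite bin_small // !mulr0].
Qed.

Lemma gbinom_vandermonde a b m :
  \sum_(k < m.+1) gbinom b k * gbinom a (m - k) = gbinom (a + b) m.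
Proof.
elim: m => [|m IHm]; first by rewrite big_ord1 !gbinom0 mulr1.
apply: (mulIf (natrS_neq0 R m)).
rewrite gbinomS_mul -IHm !mulr_suml.
have split_weight :
    \sum_(k < m.+2) gbinom b k * gbinom a (m.+1 - k) * (m.+1)%:R =
    \sum_(k < m.+2) gbinom b k * gbinom a (m.+1 - k) * k%:R +
    \sum_(k < m.+2) gbinom b k * gbinom a (m.+1 - k) * (m.+1 - k)%:R.
  rewrite -big_split /=; apply: eq_bigr => k _.
  by rewrite -mulrDr -natrD subnKC // -ltnS.
rewrite split_weight big_ord_recl /= mulr0 add0r (big_ord_recr m.+1) /=.
rewrite subnn mulr0 addr0 -big_split /=; apply: eq_bigr => k _.
have km : (k <= m)%N by rewrite -ltnS.
rewrite /bump /= add1n subSS subSn //.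
rewrite -(mulrA (gbinom b k.+1)) (mulrC _ (k.+1)%:R) mulrA gbinomS_mul.
rewrite -(mulrA _ (gbinom a (m - k).+1)) gbinomS_mul natrB //.
ring.
Qed.

End GeneralizedBinomial.

Section LaguerreMoments.
Variables (R : numFieldType) (alpha : R).

Lemma laguerreE n : laguerre n alpha =
  \poly_(k < n.+1) ((-1) ^+ k / (k`!)%:R * gbinom (n%:R + alpha) (n - k)).
Proof. by rewrite poly_def. Qed.

Lemma coef_laguerre n j : (laguerre n alpha)`_j =
  if (j < n.+1)%N then (-1) ^+ j / (j`!)%:R * gbinom (n%:R + alpha) (n - j)
  else 0.
Proof. by rewrite laguerreE coef_poly. Qed.

Lemma size_laguerre n : (size (laguerre n alpha) <= n.+1)%N.
Proof. by rewrite laguerreE size_poly. Qed.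

Lemma size_laguerre_derivn n i : (size (laguerre n alpha)^`(i) <= n.+1)%N.
Proof. exact: leq_trans (size_derivn_leq _ i) (size_laguerre n). Qed.

Lemma gamma_moment_laguerre m : gamma_moment alpha (laguerre m.+1 alpha) = 0.
Proof.
rewrite -(gamma_momentE _ (size_laguerre m.+1)).
rewrite (eq_bigr (fun k : 'I_m.+2 => gbinom (- (alpha + 1)) k *
                   gbinom (m.+1%:R + alpha) (m.+1 - k))) => [|k _]; last first.
  by rewrite coef_laguerre ltn_ord gbinomN; ring.
rewrite gbinom_vandermonde (_ : m.+1%:R + alpha + - (alpha + 1) = m%:R).
  by rewrite gbinom_nat bin_small.
by rewrite -natr1; ring.
Qed.

Lemma gamma_moment_laguerre_deriv m :
  gamma_moment alpha (laguerre m.+1 alpha)^`() = -1.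
Proof.
have := size_laguerre_derivn m.+1 1; rewrite derivn1 => /gamma_momentE <-.
rewrite big_ord_recr /= coef_deriv coef_laguerre ltnn mul0rn mulr0 addr0.
rewrite (eq_bigr (fun k : 'I_m.+1 => - (gbinom (- (alpha + 1)) k *
                   gbinom (m.+1%:R + alpha) (m - k)))) => [|k _]; last first.
  rewrite coef_deriv coef_laguerre ltnS ltn_ord subSS gbinomN -mulr_natr.
  rewrite factS natrM exprS.
  have := natr_fact_neq0 R k; have := natrS_neq0 R k.
  by move=> k1 fk; field; rewrite nat1r k1 fk.
rewrite sumrN gbinom_vandermonde (_ : m.+1%:R + alpha + - (alpha + 1) = m%:R).
  by rewrite gbinom_nat binn.
by rewrite -natr1; ring.
Qed.

Lemma gamma_moment_laguerre_deriv2 m :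
  gamma_moment alpha (laguerre m.+1 alpha)^`(2) = m%:R.
Proof.
have coef_derivn2 (p : {poly R}) k : p^`(2)`_k = p`_k.+2 *+ k.+2 *+ k.+1.
  by rewrite derivnS derivn1 !coef_deriv.
rewrite -(gamma_momentE _ (size_laguerre_derivn m.+1 2)).
case: m => [|m].
  rewrite big1 // => k _.
  by rewrite coef_derivn2 coef_laguerre !ltnS ltn0 !mul0rn mulr0.
rewrite big_ord_recr /= coef_derivn2 coef_laguerre !ltnS ltnNge leqnSn /=.
rewrite !mul0rn mulr0 addr0.
rewrite big_ord_recr /= coef_derivn2 coef_laguerre !ltnS ltnn /=.
rewrite !mul0rn mulr0 addr0.
rewrite (eq_bigr (fun k : 'I_m.+1 => gbinom (- (alpha + 1)) k *
                   gbinom (m.+2%:R + alpha) (m - k))) => [|k _]; last first.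
  rewrite coef_derivn2 coef_laguerre ifT; last by rewrite !ltnS -ltnS ltn_ord.
  rewrite !subSS gbinomN -mulrnA -mulr_natr !factS !natrM !exprS.
  have := natr_fact_neq0 R k; have := natrS_neq0 R k; have := natrS_neq0 R k.+1.
  have k2 : 2 + k%:R = k.+2%:R :> R by rewrite -[in RHS]addn2 natrD addrC.
  by move=> k2' k1 fk; field; rewrite k2 nat1r k2' k1 fk.
rewrite gbinom_vandermonde (_ : m.+2%:R + alpha + - (alpha + 1) = m.+1%:R).
  by rewrite gbinom_nat binSn.
by rewrite -natr1; ring.
Qed.

End LaguerreMoments.

Lemma gbinomz_subn (R : fieldType) (a : R) n k : (k <= n)%N ->
  gbinomz a (n%:Z - k%:Z) = gbinom a (n - k).
Proof. by move=> kn; rewrite subzn. Qed.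

Section SobolevOrthogonality.
Variables (R : numFieldType) (alpha M N : R).
Hypotheses (alpha1 : alpha + 1 != 0) (alpha2 : alpha + 2 != 0)
           (alpha3 : alpha + 3 != 0).

Lemma gamma_moment_laguerreMN m :
  gamma_moment alpha (laguerreMN alpha M N m.+1)
  + M * (laguerreMN alpha M N m.+1)`_0 = 0.
Proof.
rewrite /laguerreMN !gamma_momentD !gamma_momentZ gamma_moment_laguerre.
rewrite gamma_moment_laguerre_deriv gamma_moment_laguerre_deriv2.
rewrite !coefD !coefZ coef_deriv coef_derivn addn0 ffactnn !coef_laguerre.
rewrite /A0 /A1 /A2 /=.
case: m => [|m].
  have gbinomz_neg (b : R) : gbinomz b (1%Z - 2) = 0 by [].
  rewrite !gbinomz_neg subnn subn0 !gbinom0 gbinom1 mul0rn mulr1n.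
  by field; rewrite alpha1 alpha2 alpha3.
rewrite !gbinomz_subn // !subn1 subn2 subn0 !mulr1n /= (_ : 2`! = 2%N) //.
set a := m.+2%:R + alpha.
have a_m : a - m%:R = alpha + 2 by rewrite /a -!natr1; ring.
have a_m1 : a - m.+1%:R = alpha + 1 by rewrite /a -!natr1; ring.
have a1_m : a + 1 - m%:R = alpha + 3 by rewrite /a -!natr1; ring.
have binom1 : gbinom a m.+1 = gbinom a m * (alpha + 2) / m.+1%:R.
  by rewrite -a_m -gbinomS_mul mulfK ?natrS_neq0.
have binom2 : gbinom a m.+2 = gbinom a m.+1 * (alpha + 1) / m.+2%:R.
  by rewrite -a_m1 -gbinomS_mul mulfK ?natrS_neq0.
have binom_up0 : gbinom (a + 1) m = gbinom a m * (a + 1) / (alpha + 3).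
  by rewrite -a1_m -gbinom_addr1_mul mulfK // a1_m.
have binom_up1 : gbinom (a + 1) m.+1 = gbinom (a + 1) m * (alpha + 3) / m.+1%:R.
  by rewrite -a1_m -gbinomS_mul mulfK ?natrS_neq0.
rewrite binom_up1 binom_up0 binom2 binom1 /a -!natr1.
by field; rewrite alpha1 alpha2 alpha3 !natr1 !natrS_neq0.
Qed.

End SobolevOrthogonality.

(* The series are finite: y^(i) = 0 for i >= size y, so every truncation K
   past that point is the full sum. *)
Theorem theorem3 (R : realFieldType) (alpha M N : R)
  (halpha : -1 < alpha) (hM : 0 <= M) (hN : 0 <= N) (n : nat) (hn : (1 <= n)%N)
  (K : nat) (hK : (size (laguerreMN alpha M N n) <= K)%N) (x : R) :
  let y := laguerreMN alpha M N n in
  \sum_(i < K) bstar alpha x i * (y^`(i)).[x]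
    + M * \sum_(i < K) cstar x i * (y^`(i)).[x] = 0.
Proof.
case: n hn hK => // m _ hK y.
rewrite sum_bstar_derivn // sum_cstar_derivn //.
by apply: gamma_moment_laguerreMN; apply/eqP; lra.
Qed.
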